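(* Let $(X,d)$ be a metric space. If $\operatorname{asdim}_{AN}(X,\log(1+d))\le n$, then $(X,d)$ has an $n$-dimensional control function which is a polynomial.
   Context: For $s>0$, an $s$-scale chain between points $x,y$ of a metric space is a finite sequence $x=x_0,\dots,x_m=y$ with $d(x_i,x_{i+1})<s$. The $s$-scale connected components of a subset $U$ are the classes of the relation ''joined by an $s$-scale chain inside $U$''. A nondecreasing $D\colon\mathbb{R}_+\to\mathbb{R}_+$ is an $n$-dimensional control function of $X$ if for every $s>0$ there is a cover $\{\mathcal U_0,\dots,\mathcal U_n\}$ of $X$ such that the $s$-scale connected components of each $\mathcal U_i$ have diameter at most $D(s)$. $\operatorname{asdim}_{AN}(X,d)\le n$ means $X$ has an $n$-dimensional control function of the form $D(s)=Cs+k$ with constants $C>0$, $k\in\mathbb{R}$. $\log(1+d)$ denotes the metric $(x,y)\mapsto\log(1+d(x,y))$. *)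

From Stdlib Require Import Reals List.
Open Scope R_scope.

Definition is_metric {X : Type} (d : X -> X -> R) : Prop :=
  (forall x y, 0 <= d x y) /\
  (forall x y, d x y = 0 <-> x = y) /\
  (forall x y, d x y = d y x) /\
  (forall x y z, d x z <= d x y + d y z).

Definition log1p_metric {X : Type} (d : X -> X -> R) : X -> X -> R :=
  fun x y => ln (1 + d x y).

Inductive s_chain {X : Type} (d : X -> X -> R) (s : R) (U : X -> Prop) : X -> X -> Prop :=
| s_chain_refl : forall x, U x -> s_chain d s U x x
| s_chain_step : forall x z y, U x -> d x z < s -> s_chain d s U z y -> s_chain d s U x y.

(* the s-scale connected components of U have diameter at most b *)
Definition s_components_diam_le {X : Type} (d : X -> X -> R) (s : R) (U : X -> Prop) (b : R) : Prop :=
  forall x y, s_chain d s U x y -> d x y <= b.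

Definition is_control_function {X : Type} (d : X -> X -> R) (n : nat) (D : R -> R) : Prop :=
  (forall s, 0 <= s -> 0 <= D s) /\
  (forall s t, 0 <= s -> s <= t -> D s <= D t) /\
  (forall s, 0 < s ->
     exists U : nat -> X -> Prop,
       (forall x, exists i, (i <= n)%nat /\ U i x) /\
       (forall i, (i <= n)%nat -> s_components_diam_le d s (U i) (D s))).

Definition asdim_AN_le {X : Type} (d : X -> X -> R) (n : nat) : Prop :=
  exists C k : R, 0 < C /\ is_control_function d n (fun s => C * s + k).

(* evaluation of a real polynomial given by its coefficient list c0, c1, ... *)
Fixpoint poly_eval (p : list R) (x : R) : R :=
  match p with
  | nil => 0
  | a :: q => a + x * poly_eval q x
  end.

From Stdlib Require Import Reals List Lra.
Open Scope R_scope.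

(* Since t |-> log (1 + t) is increasing, every s-scale chain for d is a
   log(1+s)-scale chain for log(1+d).  Hence any n-dimensional control
   function D' of (X, log(1+d)) yields the n-dimensional control function
   s |-> exp (D' (log (1 + s))) of (X, d), using the same covers
   ([log1p_control]).  For D'(s) = C s + k this is exp k * (1+s)^C, which is
   dominated by the polynomial exp k * (1+s)^N for any integer N >= C
   ([exp_affine_log_le_pow]); and a nonnegative nondecreasing function
   dominating a control function is again one ([control_function_dominated]). *)

Fixpoint poly_add (p q : list R) : list R :=
  match p, q with
  | nil, _ => q
  | _, nil => p
  | a :: p', b :: q' => (a + b) :: poly_add p' q'
  end.

Lemma poly_add_eval p q x :
  poly_eval (poly_add p q) x = poly_eval p x + poly_eval q x.
Proof.
  revert q; induction p as [|a p IH]; intros [|b q]; simpl; try lra.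
  rewrite IH; ring.
Qed.

(* The polynomial a * (1 + x)^N, built by (1 + x) * P = P + x * P. *)
Fixpoint binom_pow_poly (a : R) (N : nat) : list R :=
  match N with
  | O => a :: nil
  | S m => poly_add (binom_pow_poly a m) (0 :: binom_pow_poly a m)
  end.

Lemma binom_pow_poly_eval a N x :
  poly_eval (binom_pow_poly a N) x = a * (1 + x) ^ N.
Proof.
  induction N as [|N IH]; simpl.
  - ring.
  - rewrite poly_add_eval; simpl; rewrite IH; ring.
Qed.

Lemma exp_monotone x y : x <= y -> exp x <= exp y.
Proof.
  intros [Hlt | ->]; [left; now apply exp_increasing | lra].
Qed.

Lemma ln_monotone x y : 0 < x -> x <= y -> ln x <= ln y.
Proof.
  intros Hx [Hlt | ->]; [left; now apply ln_increasing | lra].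
Qed.

Lemma ln_1p_nonneg s : 0 <= s -> 0 <= ln (1 + s).
Proof.
  intros Hs; rewrite <- ln_1; apply ln_monotone; lra.
Qed.

Lemma s_chain_transfer {X : Type} (d d' : X -> X -> R) (s s' : R) U x y :
  (forall a b, d a b < s -> d' a b < s') ->
  s_chain d s U x y -> s_chain d' s' U x y.
Proof.
  intros Hstep Hch; induction Hch as [x Hx | x z y Hx Hxz _ IH].
  - now constructor.
  - eapply s_chain_step; eauto.
Qed.

Lemma log1p_control {X : Type} (d : X -> X -> R) (n : nat) (D' : R -> R) :
  (forall x y, 0 <= d x y) ->
  is_control_function (log1p_metric d) n D' ->
  is_control_function d n (fun s => exp (D' (ln (1 + s)))).
Proof.
  intros Hpos [_ [Hmono Hcov]]; split; [|split].
  - intros s _; left; apply exp_pos.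
  - intros s t Hs Hst; apply exp_monotone, Hmono.
    + now apply ln_1p_nonneg.
    + apply ln_monotone; lra.
  - intros s Hs.
    assert (Hls : 0 < ln (1 + s)) by (rewrite <- ln_1; apply ln_increasing; lra).
    destruct (Hcov _ Hls) as [U [Hcover Hdiam]].
    exists U; split; [exact Hcover|].
    intros i Hi x y Hch.
    assert (Hlog : ln (1 + d x y) <= D' (ln (1 + s))).
    { apply (Hdiam i Hi x y); revert Hch; apply s_chain_transfer.
      intros a b Hab; unfold log1p_metric.
      apply ln_increasing; [specialize (Hpos a b); lra | lra]. }
    apply exp_monotone in Hlog.
    rewrite exp_ln in Hlog by (specialize (Hpos x y); lra).
    lra.
Qed.

Lemma control_function_dominated {X : Type} (d : X -> X -> R) (n : nat)
  (D P : R -> R) :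
  is_control_function d n D ->
  (forall s, 0 <= s -> 0 <= P s) ->
  (forall s t, 0 <= s -> s <= t -> P s <= P t) ->
  (forall s, 0 < s -> D s <= P s) ->
  is_control_function d n P.
Proof.
  intros [_ [_ Hcov]] Hnonneg Hmono Hdom; split; [exact Hnonneg | split; [exact Hmono|]].
  intros s Hs; destruct (Hcov s Hs) as [U [Hcover Hdiam]].
  exists U; split; [exact Hcover|].
  intros i Hi x y Hch; specialize (Hdiam i Hi x y Hch); specialize (Hdom s Hs); lra.
Qed.

Lemma exp_affine_log_le_pow (C k s : R) (N : nat) :
  0 <= s -> C <= INR N -> exp (C * ln (1 + s) + k) <= exp k * (1 + s) ^ N.
Proof.
  intros Hs HCN.
  assert (Hpow : exp (INR N * ln (1 + s)) = (1 + s) ^ N)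
    by (apply (Rpower_pow N (1 + s)); lra).
  rewrite exp_plus, Rmult_comm, <- Hpow.
  apply Rmult_le_compat_l; [left; apply exp_pos|].
  apply exp_monotone, Rmult_le_compat_r; [now apply ln_1p_nonneg | exact HCN].
Qed.

Theorem corollary2p4 (X : Type) (d : X -> X -> R) (n : nat) :
  is_metric d ->
  asdim_AN_le (log1p_metric d) n ->
  exists p : list R, is_control_function d n (poly_eval p).
Proof.
  intros [Hpos _] [C [k [_ Hctrl]]].
  destruct (INR_unbounded C) as [N HN].
  exists (binom_pow_poly (exp k) N).
  apply (control_function_dominated d n _ _ (log1p_control d n _ Hpos Hctrl)).
  - intros s Hs; rewrite binom_pow_poly_eval.
    apply Rmult_le_pos; [left; apply exp_pos | apply pow_le; lra].
  - intros s t Hs Hst; rewrite !binom_pow_poly_eval.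
    apply Rmult_le_compat_l; [left; apply exp_pos | apply pow_incr; lra].
  - intros s Hs; rewrite binom_pow_poly_eval.
    apply exp_affine_log_le_pow; lra.
Qed.
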